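(* Let $\mathbf{C}$ be a locally small category, $\Omega$ an object, $\Phi\colon\mathbf{C}^{\mathrm{op}}\to\mathbf{Pos}$ a functor whose fibres have all meets preserved by reindexing $f^*=\Phi f$, and $d_\Omega\in\Phi\Omega$. Let $\alpha_Y(S)=\bigwedge_{k\in S}k^*(d_\Omega)$, $\gamma_Y(d)=\{k\in\mathbf{C}(Y,\Omega)\mid d\preceq k^*(d_\Omega)\}$, $\mathrm{cl}_Y=\gamma_Y\circ\alpha_Y$. Let $F\colon\mathbf{C}\to\mathbf{C}$ be a functor, $(\mathit{ev}_\lambda\colon F\Omega\to\Omega)_{\lambda\in\Lambda}$ morphisms, $\Lambda_Y(S)=\{\mathit{ev}_\lambda\circ Fh\mid\lambda\in\Lambda,h\in S\}$, and $\mathcal{K}_X=\alpha_{FX}\circ\Lambda_X\circ\gamma_X$. Fix an object $X$ and a closure operator $\mathrm{cl}'_X$ on $(\mathcal{P}(\mathbf{C}(X,\Omega)),\subseteq)$ that is a subclosure of $\mathrm{cl}_X$ ($\mathrm{cl}'_X\subseteq\mathrm{cl}_X$ pointwise) and is compatible ($\Lambda_X\circ\mathrm{cl}'_X\circ\mathrm{cl}_X\subseteq\mathrm{cl}_{FX}\circ\Lambda_X\circ\mathrm{cl}'_X$ pointwise). For a set $\Theta_X\subseteq\mathbf{C}(X,\Omega)$ and a coalgebra $c\colon X\to FX$ define the logic function $\mathrm{lo}_X(S)=\mathcal{P}(c^\bullet)(\Lambda_X(\mathrm{cl}'_X(S)))\cup\Theta_X$ and the behaviour function $\mathrm{be}_X(d)=c^*(\mathcal{K}_X(d))\wedge\alpha_X(\Theta_X)$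 on $\Phi X$. Then $\alpha_X\circ\mathrm{lo}_X\circ\gamma_X=\mathrm{be}_X$.
   Context: A closure operator is a monotone, idempotent, extensive map. $c^\bullet\colon\mathbf{C}(FX,\Omega)\to\mathbf{C}(X,\Omega)$ is precomposition with $c$, $\mathcal{P}(c^\bullet)$ its direct image, and $c^*=\Phi c\colon\Phi(FX)\to\Phi X$. *)

Set Implicit Arguments.
Unset Strict Implicit.

Definition subset {T : Type} (A B : T -> Prop) : Prop := forall x, A x -> B x.

Record Cat := {
  Obj :> Type;
  Hom : Obj -> Obj -> Type;
  idm : forall X, Hom X X;
  comp : forall X Y Z, Hom Y Z -> Hom X Y -> Hom X Z;
  comp_id_l : forall X Y (f : Hom X Y), comp (idm Y) f = f;
  comp_id_r : forall X Y (f : Hom X Y), comp f (idm X) = f;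
  comp_assoc : forall X Y Z W (h : Hom Z W) (g : Hom Y Z) (f : Hom X Y),
      comp h (comp g f) = comp (comp h g) f
}.
Arguments Hom {c} _ _.
Arguments idm {c} _.
Arguments comp {c X Y Z} _ _.

Record Endo (C : Cat) := {
  Fo : C -> C;
  Fm : forall X Y, @Hom C X Y -> @Hom C (Fo X) (Fo Y);
  Fm_id : forall X, Fm (@idm C X) = @idm C (Fo X);
  Fm_comp : forall X Y Z (g : @Hom C Y Z) (f : @Hom C X Y),
      Fm (comp g f) = comp (Fm g) (Fm f)
}.

(* A functor Phi : C^op -> Pos whose fibres have all meets (given by [meet]),
   preserved by the reindexing maps f^* = reix f. *)
Record PosFib (C : Cat) := {
  fib : C -> Type;
  le : forall X, fib X -> fib X -> Prop;
  le_refl : forall X (a : fib X), le a a;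
  le_trans : forall X (a b c : fib X), le a b -> le b c -> le a c;
  le_antisym : forall X (a b : fib X), le a b -> le b a -> a = b;
  reix : forall X Y, @Hom C X Y -> fib Y -> fib X;
  reix_mono : forall X Y (f : @Hom C X Y) (a b : fib Y), le a b -> le (reix f a) (reix f b);
  reix_id : forall X (a : fib X), reix (@idm C X) a = a;
  reix_comp : forall X Y Z (g : @Hom C Y Z) (f : @Hom C X Y) (a : fib Z),
      reix (comp g f) a = reix f (reix g a);
  meet : forall X, (fib X -> Prop) -> fib X;
  meet_lb : forall X (S : fib X -> Prop) a, S a -> le (meet S) a;
  meet_glb : forall X (S : fib X -> Prop) b, (forall a, S a -> le b a) -> le b (meet S);
  reix_meet : forall X Y (f : @Hom C X Y) (S : fib Y -> Prop),
      reix f (meet S) = meet (fun b => exists a, S a /\ b = reix f a)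
}.

Section Ops.
Variables (C : Cat) (Phi : PosFib C) (Om : C) (dOm : fib Phi Om).

Definition meet2 X (a b : fib Phi X) : fib Phi X :=
  meet (fun x => x = a \/ x = b).

Definition alpha Y (S : @Hom C Y Om -> Prop) : fib Phi Y :=
  meet (fun a => exists k, S k /\ a = reix k dOm).

Definition gamma Y (d : fib Phi Y) : @Hom C Y Om -> Prop :=
  fun k => le d (reix k dOm).

Definition cl Y (S : @Hom C Y Om -> Prop) : @Hom C Y Om -> Prop :=
  gamma (alpha S).

Variables (F : Endo C) (L : Type) (ev : L -> @Hom C (Fo F Om) Om).

Definition LamOp Y (S : @Hom C Y Om -> Prop) : @Hom C (Fo F Y) Om -> Prop :=
  fun g => exists l h, S h /\ g = comp (ev l) (Fm F h).

Definition Kop X (d : fib Phi X) : fib Phi (Fo F X) :=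
  alpha (LamOp (gamma d)).

End Ops.

Definition closure_op {T : Type} (c : (T -> Prop) -> (T -> Prop)) : Prop :=
  (forall S S', subset S S' -> subset (c S) (c S')) /\
  (forall S, subset S (c S)) /\
  (forall S, subset (c (c S)) (c S) /\ subset (c S) (c (c S))).

(* direct image P(c^bullet)(T) = { k o c | k in T } *)
Definition pre_img (C : Cat) (Om X : C) (F : Endo C) (c : @Hom C X (Fo F X))
  (T : @Hom C (Fo F X) Om -> Prop) : @Hom C X Om -> Prop :=
  fun g => exists k, T k /\ g = comp k c.

(* Subclosure gives cl' (gamma d) <= cl (gamma d) = gamma d, while extensivity gives
   the converse, so [gamma d] is a fixed point of cl' and cl' disappears from
   lo (gamma d).  What remains is alpha applied to a union and to a direct image
   under precomposition with c; alpha turns the first into a binary meet and,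
   since reindexing preserves meets, the second into reindexing along c. *)

Set Implicit Arguments.
Unset Strict Implicit.

Section Galois.
Variables (C : Cat) (Phi : PosFib C) (Om : C) (dOm : fib Phi Om).

Lemma le_alpha Y (S : @Hom C Y Om -> Prop) k :
  S k -> le (alpha dOm S) (reix k dOm).
Proof. intros Hk. apply meet_lb. exists k. split; [exact Hk | reflexivity]. Qed.

Lemma alpha_antitone Y (S T : @Hom C Y Om -> Prop) :
  subset S T -> le (alpha dOm T) (alpha dOm S).
Proof.
  intros HST. apply meet_glb. intros a [k [Hk ->]].
  apply le_alpha. apply HST. exact Hk.
Qed.

Lemma alpha_eq Y (S T : @Hom C Y Om -> Prop) :
  subset S T -> subset T S -> alpha dOm S = alpha dOm T.
Proof. intros HST HTS. apply le_antisym; apply alpha_antitone; assumption. Qed.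

Lemma le_alpha_gamma Y (d : fib Phi Y) : le d (alpha dOm (gamma dOm d)).
Proof. apply meet_glb. intros a [k [Hk ->]]. exact Hk. Qed.

Lemma cl_gamma Y (d : fib Phi Y) : subset (cl dOm (gamma dOm d)) (gamma dOm d).
Proof. intros k Hk. exact (le_trans (le_alpha_gamma d) Hk). Qed.

Lemma alpha_union Y (S T : @Hom C Y Om -> Prop) :
  alpha dOm (fun k => S k \/ T k) = meet2 (alpha dOm S) (alpha dOm T).
Proof.
  apply le_antisym.
  - apply meet_glb. intros a [-> | ->]; apply alpha_antitone; intros k Hk; auto.
  - apply meet_glb. intros a [k [[Hk | Hk] ->]].
    + eapply le_trans; [apply meet_lb; left; reflexivity | apply le_alpha; exact Hk].
    + eapply le_trans; [apply meet_lb; right; reflexivity | apply le_alpha; exact Hk].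
Qed.

Lemma alpha_pre_img (F : Endo C) X (c : @Hom C X (Fo F X)) (T : @Hom C (Fo F X) Om -> Prop) :
  alpha dOm (pre_img c T) = reix c (alpha dOm T).
Proof.
  apply le_antisym.
  - unfold alpha at 2. rewrite reix_meet. apply meet_glb.
    intros b [a [[k [Hk ->]] ->]]. rewrite <- reix_comp.
    apply le_alpha. exists k. split; [exact Hk | reflexivity].
  - apply meet_glb. intros a [g [[k [Hk ->]] ->]]. rewrite reix_comp.
    apply reix_mono. apply le_alpha. exact Hk.
Qed.

Variables (F : Endo C) (L : Type) (ev : L -> @Hom C (Fo F Om) Om).

Lemma LamOp_mono Y (S T : @Hom C Y Om -> Prop) :
  subset S T -> subset (LamOp ev S) (LamOp ev T).
Proof. intros HST g [l [h [Hh ->]]]. exists l, h. split; [apply HST; exact Hh | reflexivity]. Qed.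

Lemma pre_img_mono X (c : @Hom C X (Fo F X)) (S T : @Hom C (Fo F X) Om -> Prop) :
  subset S T -> subset (pre_img c S) (pre_img c T).
Proof. intros HST g [k [Hk ->]]. exists k. split; [apply HST; exact Hk | reflexivity]. Qed.

End Galois.

Theorem theorem3 (C : Cat) (Phi : PosFib C) (Om : C) (dOm : fib Phi Om)
  (F : Endo C) (L : Type) (ev : L -> @Hom C (Fo F Om) Om)
  (X : C) (cl' : (@Hom C X Om -> Prop) -> (@Hom C X Om -> Prop))
  (Hclos : closure_op cl')
  (Hsub : forall S, subset (cl' S) (cl dOm S))
  (Hcompat : forall S,
      subset (LamOp ev (cl' (cl dOm S)))
             (cl dOm (LamOp ev (cl' S))))
  (Theta : @Hom C X Om -> Prop) (c : @Hom C X (Fo F X)) :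
  let lo := fun S : @Hom C X Om -> Prop =>
    fun g => pre_img c (LamOp ev (cl' S)) g \/ Theta g in
  let be := fun d : fib Phi X =>
    meet2 (reix c (Kop dOm ev d)) (alpha dOm Theta) in
  forall d : fib Phi X, alpha dOm (lo (gamma dOm d)) = be d.
Proof.
  intros lo be d.
  destruct Hclos as [_ [Hext _]].
  assert (Hfix : subset (cl' (gamma dOm d)) (gamma dOm d)).
  { intros h Hh. apply cl_gamma, Hsub, Hh. }
  unfold lo, be, Kop. rewrite <- alpha_pre_img, <- alpha_union.
  apply alpha_eq; intros g [Hg | Hg]; try (right; exact Hg); left.
  - exact (pre_img_mono (LamOp_mono Hfix) Hg).
  - exact (pre_img_mono (LamOp_mono (Hext _)) Hg).
Qed.
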